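(* Let $\mathcal{F}$ be a saturated fusion system over a finite $p$-group $S$, and let $P\le Q\le S$ be such that $P\trianglelefteq\mathcal{F}$ and $Q/P\trianglelefteq\mathcal{F}/P$. If $Q$ is abelian, or if $P\le Z(\mathcal{F})$, then $Q\trianglelefteq\mathcal{F}$.
   Context: A fusion system $\mathcal{F}$ over a finite $p$-group $S$ is a category whose objects are the subgroups of $S$, with $\mathrm{Hom}_S(P,Q)\subseteq\mathrm{Hom}_{\mathcal{F}}(P,Q)\subseteq\mathrm{Inj}(P,Q)$, every morphism an isomorphism in $\mathcal{F}$ followed by an inclusion; saturation is given by Puig's Sylow and extension axioms. A subgroup $Q\le S$ is normal in $\mathcal{F}$ ($Q\trianglelefteq\mathcal{F}$) if every morphism of $\mathcal{F}$ extends to a morphism of $\mathcal{F}$ sending $Q$ to itself; it is central if every morphism extends to one sending $Q$ to itself via the identity, and $Z(\mathcal{F})$ is the largest central subgroup. For $P\trianglelefteq\mathcal{F}$, $\mathcal{F}/P$ is the fusion system over $S/P$ whose morphisms $R_1/P\to R_2/P$ (for $P\le R_1,R_2\le S$) are the maps induced by morphisms $\varphi\in\mathrm{Hom}_{\mathcal{F}}(R_1,R_2)$. *)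

From mathcomp Require Import all_boot all_fingroup all_solvable.
Set Implicit Arguments. Unset Strict Implicit. Unset Printing Implicit Defensive.
Import GroupScope.

Section Fusion.
Variable gT : finGroupType.

(* A fusion system over S is given by its hom-predicate:
   [hom P Q f] means "f (restricted to P) is in Hom_F(P,Q)".  Morphisms are
   represented by total functions gT -> gT; only their values on P matter. *)
Definition fhom_pred := {set gT} -> {set gT} -> (gT -> gT) -> Prop.

Definition is_fusion_system (S : {set gT}) (hom : fhom_pred) : Prop :=
  [/\
      (forall P Q f, hom P Q f ->
         [/\ group_set P /\ group_set Q, P \subset S /\ Q \subset S,
             {in P &, {morph f : x y / x * y}},
             {in P &, injective f} & f @: P \subset Q]),
      (* morphisms are maps on their domain: representatives agreeing on P *)
      (forall P Q f g, hom P Q f -> {in P, f =1 g} -> hom P Q g),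
      (forall (P Q : {group gT}) g, P \subset S -> Q \subset S -> g \in S ->
         P :^ g \subset Q -> hom P Q (fun x => x ^ g)),
      (forall P Q R f g, hom P Q f -> hom Q R g -> hom P R (g \o f)) &
      (forall P Q f, hom P Q f ->
         hom P (f @: P) f /\ exists g, hom (f @: P) P g /\ {in P, cancel f g})].

Definition AutS (S Q : {set gT}) : {set {perm gT}} :=
  [set a in Aut Q | [exists g in 'N_S(Q), [forall x in Q, a x == x ^ g]]].

Definition fully_normalized (S : {set gT}) (hom : fhom_pred) (Q : {set gT}) :=
  forall f, hom Q S f -> #|'N_S(f @: Q)| <= #|'N_S(Q)|.

Definition fully_centralized (S : {set gT}) (hom : fhom_pred) (Q : {set gT}) :=
  forall f, hom Q S f -> #|'C_S(f @: Q)| <= #|'C_S(Q)|.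

(* N_phi = { g in N_S(Q) | phi c_g phi^-1 in Aut_S(phi(Q)) } *)
Definition Nphi (S Q : {set gT}) (f : gT -> gT) : {set gT} :=
  [set g in 'N_S(Q) |
     [exists h in 'N_S(f @: Q), [forall x in Q, f (x ^ g) == f x ^ h]]].

Definition saturated_fusion_system (p : nat) (S : {group gT}) (hom : fhom_pred) :=
  [/\ is_fusion_system S hom,
      (forall Q : {group gT}, Q \subset S -> fully_normalized S hom Q ->
         fully_centralized S hom Q /\
         exists AF : {set {perm gT}},
           (forall a : {perm gT}, a \in AF <-> (a \in Aut Q /\ hom Q Q a)) /\
           p.-Sylow(AF) (AutS S Q)) &
      (forall (Q : {group gT}) f, hom Q S f -> fully_centralized S hom (f @: Q) ->
         exists g, hom (Nphi S Q f) S g /\ {in Q, g =1 f})].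

Definition fnormal (S : {set gT}) (hom : fhom_pred) (Q : {set gT}) :=
  Q \subset S /\
  forall A B f, hom A B f ->
    exists A' B' g, [/\ hom A' B' g, A \subset A', Q \subset A',
                        {in A, g =1 f} & g @: Q = Q].

Definition fcentral (S : {set gT}) (hom : fhom_pred) (Q : {set gT}) :=
  Q \subset S /\
  forall A B f, hom A B f ->
    exists A' B' g, [/\ hom A' B' g, A \subset A', Q \subset A',
                        {in A, g =1 f} & {in Q, g =1 id}].

Definition is_fcenter (S : {set gT}) (hom : fhom_pred) (Z : {group gT}) :=
  fcentral S hom Z /\ forall R : {group gT}, fcentral S hom R -> R \subset Z.

Definition quotient_hom (P : {group gT}) (hom : fhom_pred) :
  {set coset_of P} -> {set coset_of P} -> (coset_of P -> coset_of P) -> Prop :=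
  fun A B f => exists (R1 R2 : {group gT}) (phi : gT -> gT),
    [/\ P \subset R1 /\ P \subset R2, hom R1 R2 phi, R1 / P = A, R2 / P = B &
        {in R1, forall x, f (coset P x) = coset P (phi x)}].

End Fusion.
Arguments quotient_hom [gT] P hom _ _ _.

From mathcomp Require Import all_boot all_fingroup all_solvable.
From Stdlib Require Import Classical.
Set Implicit Arguments. Unset Strict Implicit. Unset Printing Implicit Defensive.
Import GroupScope.

(* Since P is normal in F, it suffices to extend every morphism f : A -> B
   with P <= A to one mapping Q onto itself; argue by descending induction on
   |A|.  When f(A) = C is fully normalized, the extension axiom extends f to
   N_f, and N_f contains N_Q(A): for q in N_Q(A), the automorphism f c_q f^-1
   of C is conjugation by some r in N_S(C) (r = 1 when Q is abelian, and r a
   lift through F/P of the action of q when P is central) composed with an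
   automorphism stabilizing an Aut_F(C)-invariant series W <= C.  Such
   automorphisms form a normal p-subgroup of Aut_F(C), hence lie in its Sylow
   subgroup Aut_S(C).  So f extends to N_AQ(A) > A, and the induction applies.
   A general f reduces to this case through an F-isomorphism from f(A) onto a
   fully normalized conjugate. *)

Lemma exists_max_measure (T : Type) (R : T -> Prop) (m : T -> nat) b x0 :
  R x0 -> (forall x, R x -> m x <= b) ->
  exists2 x, R x & forall y, R y -> m y <= m x.
Proof.
move=> Rx0 ub; have [n] := ubnP (b - m x0).
elim: n x0 Rx0 => [|n IHn] x Rx; rewrite ?ltn0 // => ltn.
have [[y Ry lt_xy] | no_larger] := classic (exists2 y, R y & m x < m y).
  apply: (IHn y Ry); have lt_xb := leq_trans lt_xy (ub y Ry).
  exact: leq_trans (ltn_sub2l lt_xb lt_xy) ltn.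
exists x => // y Ry; rewrite leqNgt; apply/negP => lt_xy.
by apply: no_larger; exists y.
Qed.

Section FusionSystem.
Variables (gT : finGroupType) (S : {group gT}) (hom : fhom_pred gT).
Hypothesis fsF : is_fusion_system S hom.

Lemma fhomP A B f : hom A B f ->
  [/\ group_set A /\ group_set B, A \subset S /\ B \subset S,
      {in A &, {morph f : x y / x * y}}, {in A &, injective f} & f @: A \subset B].
Proof. by case: fsF => homP _ _ _ _ /homP. Qed.

Lemma eq_fhom A B f g : hom A B f -> {in A, f =1 g} -> hom A B g.
Proof. by case: fsF => _ eq_hom _ _ _; apply: eq_hom. Qed.

Lemma fhom_conj (A B : {group gT}) g : A \subset S -> B \subset S -> g \in S ->
  A :^ g \subset B -> hom A B (conjg^~ g).
Proof. by case: fsF => _ _ conj_hom _ _; apply: conj_hom. Qed.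

Lemma fhom_comp A B C f g : hom A B f -> hom B C g -> hom A C (g \o f).
Proof. by case: fsF => _ _ _ comp_hom _; apply: comp_hom. Qed.

Lemma fhom_onto A B f : hom A B f -> hom A (f @: A) f.
Proof. by case: fsF => _ _ _ _ iso_hom /iso_hom[]. Qed.

Lemma fhom_inv A B f : hom A B f ->
  exists g, [/\ hom (f @: A) A g, {in A, cancel f g} & {in f @: A, cancel g f}].
Proof.
case: fsF => _ _ _ _ iso_hom /iso_hom[_ [g [hg fK]]]; exists g; split=> //.
by move=> _ /imsetP[x Ax ->]; rewrite fK.
Qed.

Lemma fhom_incl (A B : {group gT}) : A \subset B -> B \subset S -> hom A B id.
Proof.
move=> sAB sBS; have sAS := subset_trans sAB sBS.
apply: eq_fhom (fhom_conj sAS sBS (group1 S) _) _; first by rewrite conjsg1.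
by move=> x _; rewrite /= conjg1.
Qed.

Lemma fhom_restr A B f (A' : {group gT}) : hom A B f -> A' \subset A -> hom A' B f.
Proof.
move=> hf sA'A; have [[gA _] [sAS _] _ _ _] := fhomP hf.
exact: fhom_comp (fhom_incl (B := group gA) sA'A sAS) hf.
Qed.

Lemma fhom_widen A B f (B' : {group gT}) :
  hom A B f -> B \subset B' -> B' \subset S -> hom A B' f.
Proof.
move=> hf sBB' sB'S; have [[_ gB] _ _ _ _] := fhomP hf.
exact: fhom_comp hf (fhom_incl (A := group gB) sBB' sB'S).
Qed.

Lemma fhom_mem A B f x : hom A B f -> x \in A -> f x \in B.
Proof. by case/fhomP=> _ _ _ _ /subsetP sfAB Ax; apply/sfAB/imset_f. Qed.

Lemma fhom_im_group A B f : hom A B f -> group_set (f @: A).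
Proof. by case/fhom_onto/fhomP=> [[]]. Qed.

Lemma card_fhom_im A B f : hom A B f -> #|f @: A| = #|A|.
Proof. by case/fhomP=> _ _ _ injf _; rewrite card_in_imset. Qed.

Lemma fhom1 A B f : hom A B f -> f 1 = 1.
Proof.
move=> hf; have [[gA _] _ fM _ _] := fhomP hf; pose GA := group gA.
by apply: (mulgI (f 1)); rewrite -fM ?(group1 GA) // !mulg1.
Qed.

Lemma fhomV A B f x : hom A B f -> x \in A -> f x^-1 = (f x)^-1.
Proof.
move=> hf Ax; have [[gA _] _ fM _ _] := fhomP hf; pose GA := group gA.
by apply: (mulgI (f x)); rewrite -fM ?(groupV GA) // !mulgV (fhom1 hf).
Qed.

Lemma fhomJ A B f x y : hom A B f -> x \in A -> y \in A -> f (x ^ y) = f x ^ f y.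
Proof.
move=> hf Ax Ay; have [[gA _] _ fM _ _] := fhomP hf; pose GA := group gA.
have Ay' : y^-1 \in GA by rewrite groupV.
by rewrite /conjg fM ?fM ?(fhomV hf Ay) ?(@groupM _ GA).
Qed.

Lemma fhom_imM X Y g (A R : {set gT}) : hom X Y g -> A \subset X -> R \subset X ->
  g @: (A * R) = g @: A * g @: R.
Proof.
move=> hg /subsetP sAX /subsetP sRX; have [_ _ gM _ _] := fhomP hg.
apply/eqP; rewrite eqEsubset; apply/andP; split; apply/subsetP.
  move=> _ /imsetP[_ /mulsgP[a r Aa Rr ->] ->].
  by rewrite gM ?(sAX a) ?(sRX r) // mem_mulg ?imset_f.
move=> _ /mulsgP[_ _ /imsetP[a Aa ->] /imsetP[r Rr ->] ->].
by rewrite -gM ?(sAX a) ?(sRX r) // imset_f ?mem_mulg.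
Qed.

Lemma fhom_conjS s : s \in S -> hom S S (conjg^~ s).
Proof. by move=> Ss; apply: fhom_conj; rewrite ?conjGid. Qed.

Lemma fhom_perm C g : hom C C g ->
  exists a : {perm gT}, [/\ a \in Aut C, hom C C a & {in C, a =1 g}].
Proof.
move=> hg; have [[gC _] _ gM ginj sgC] := fhomP hg; pose GC := group gC.
have aE := perm_inE ginj sgC; exists (perm_in ginj sgC); split.
- rewrite inE perm_in_on; apply/morphicP=> x y Cx Cy.
  by rewrite !aE ?gM ?(@groupM _ GC).
- by apply: eq_fhom hg _ => x Cx; rewrite aE.
- exact: aE.
Qed.

Lemma AutF_group_set (C : {group gT}) (AF : {set {perm gT}}) : C \subset S ->
  (forall a, a \in AF <-> a \in Aut C /\ hom C C a) -> group_set AF.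
Proof.
move=> sCS AFP; apply/group_setP; split.
  apply/AFP; split; first exact: group1.
  by apply: eq_fhom (fhom_incl (subxx C) sCS) _ => x _; rewrite perm1.
move=> a b /AFP[Aa ha] /AFP[Ab hb]; apply/AFP; split; first exact: groupM.
by apply: eq_fhom (fhom_comp ha hb) _ => x _; rewrite permM.
Qed.

Lemma mem_Nphi A f q h : q \in 'N_S(A) -> h \in 'N_S(f @: A) ->
  {in A, forall x, f (x ^ q) = f x ^ h} -> q \in Nphi S A f.
Proof.
move=> NSq NSh fJ; rewrite inE NSq; apply/existsP; exists h; rewrite NSh.
by apply/forall_inP=> x Ax; rewrite fJ.
Qed.

Lemma sub_Nphi A B f : hom A B f -> A \subset Nphi S A f.
Proof.
move=> hf; have [[gA _] [sAS _] _ _ _] := fhomP hf; pose GA := group gA.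
apply/subsetP=> a Aa; apply: (mem_Nphi (h := f a)) => [||x Ax].
- by rewrite inE (subsetP sAS) ?(subsetP (normG GA)).
- have [[_ gfA] [_ sfAS] _ _ _] := fhomP (fhom_onto hf).
  by rewrite inE (subsetP sfAS) ?(subsetP (normG (group gfA))) ?imset_f.
- exact: fhomJ hf Ax Aa.
Qed.

Definition strongly_closed (R : {set gT}) :=
  forall A B f x, hom A B f -> x \in A -> x \in R -> f x \in R.

Definition extends_normalizing (R A : {set gT}) (f : gT -> gT) :=
  exists A' B' g, [/\ hom A' B' g, A \subset A', R \subset A',
                      {in A, g =1 f} & g @: R = R].

Lemma fnormal_strongly_closed R : fnormal S hom R -> strongly_closed R.
Proof.
case=> _ nR A B f x hf Ax Rx; have [A' [B' [g [_ _ _ gf gR]]]] := nR _ _ _ hf.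
by rewrite -gf // -gR imset_f.
Qed.

Lemma strongly_closed_im R A B f :
  strongly_closed R -> hom A B f -> R \subset A -> f @: R = R.
Proof.
move=> clR hf /subsetP sRA; have [_ _ _ injf _] := fhomP hf.
apply/eqP; rewrite eqEcard card_in_imset ?leqnn ?andbT; last first.
  by move=> x y /sRA Ax /sRA Ay; apply: injf.
by apply/subsetP=> _ /imsetP[x Rx ->]; apply: clR hf (sRA x Rx) Rx.
Qed.

Lemma strongly_closed_norm (R : {set gT}) :
  R \subset S -> strongly_closed R -> S \subset 'N(R).
Proof.
move=> /subsetP sRS clR; apply/subsetP=> s Ss; rewrite inE.
by apply/subsetP=> _ /imsetP[z Rz ->]; apply: clR (fhom_conjS Ss) (sRS z Rz) Rz.
Qed.

Lemma fcentral_cent (Z : {set gT}) : fcentral S hom Z -> S \subset 'C(Z).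
Proof.
case=> /subsetP sZS cZ; apply/centsP=> s Ss z Zz; apply/commute_sym/commgP.
have [_ [_ [g [_ _ _ gJ gZ]]]] := cZ _ _ _ (fhom_conjS Ss).
by rewrite -conjg_fix -(gJ z (sZS z Zz)) gZ.
Qed.

Lemma exists_fully_normalized (B : {group gT}) : B \subset S ->
  exists (C : {group gT}) chi,
    [/\ hom B C chi, chi @: B = C & fully_normalized S hom C].
Proof.
pose conjugate (C : {group gT}) := exists chi, hom B C chi /\ chi @: B = C.
move=> sBS; have [|C|C [chi [hchi chiB]] maxC] :=
  @exists_max_measure _ conjugate (fun C => #|'N_S(C)|) #|S| B.
- by exists id; rewrite imset_id; split=> //; apply: fhom_incl.
- by move=> _; rewrite subset_leq_card ?subsetIl.
exists C, chi; split=> // f hf; pose fC := group (fhom_im_group hf).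
apply: (maxC fC); exists (f \o chi); split; last by rewrite imset_comp chiB.
exact: fhom_comp hchi (fhom_onto hf).
Qed.

Lemma extends_normalizingS (R A A1 : {set gT}) f g :
  A \subset A1 -> {in A, g =1 f} -> extends_normalizing R A1 g ->
  extends_normalizing R A f.
Proof.
move=> sAA1 gf [A' [B' [g' [hg' sA1A' sRA' g'g g'R]]]].
exists A', B', g'; split=> //; first exact: subset_trans sAA1 sA1A'.
by move=> x Ax; rewrite g'g ?(subsetP sAA1) ?gf.
Qed.

Lemma extends_normalizing_cancel (R A B : {group gT}) f chi :
  S \subset 'N(R) -> hom A B f ->
  extends_normalizing R A (chi \o f) -> extends_normalizing R B chi ->
  extends_normalizing R A f.
Proof.
move=> nRS hf [A1 [C1 [g1 [hg1 sAA1 sRA1 g1E g1R]]]].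
case=> [A2 [C2 [g2 [hg2 sBA2 sRA2 g2E g2R]]]].
have [_ [sAS sBS] _ _ _] := fhomP hf.
have [[gA1 _] _ _ _ _] := fhomP hg1; have [[gA2 _] _ _ _ _] := fhomP hg2.
have hg1R : hom (A <*> R) (g1 @: (A <*> R)) g1.
  by apply/fhom_onto/(fhom_restr hg1); rewrite -[A1]/(gval (group gA1)) join_subG sAA1.
have hg2R : hom (B <*> R) (g2 @: (B <*> R)) g2.
  by apply/fhom_onto/(fhom_restr hg2); rewrite -[A2]/(gval (group gA2)) join_subG sBA2.
have [g2i [hg2i g2K _]] := fhom_inv hg2R.
have sg1g2 : g1 @: (A <*> R) \subset g2 @: (B <*> R).
  rewrite !norm_joinEl ?(subset_trans _ nRS) // (fhom_imM hg1) // (fhom_imM hg2) //.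
  rewrite g1R g2R mulSg //; apply/subsetP=> _ /imsetP[a Aa ->].
  by rewrite g1E //= -g2E ?imset_f ?(fhom_mem hf Aa).
have BRf a : a \in A -> f a \in B <*> R.
  by move=> Aa; rewrite (subsetP (joing_subl B R)) ?(fhom_mem hf Aa).
exists (A <*> R), (B <*> R), (g2i \o g1); split.
- exact: fhom_comp hg1R (fhom_restr hg2i (A' := group (fhom_im_group hg1R)) sg1g2).
- exact: joing_subl.
- exact: joing_subr.
- by move=> a Aa /=; rewrite g1E //= -g2E ?g2K ?(fhom_mem hf Aa) ?BRf.
rewrite imset_comp g1R -{1}g2R -imset_comp -[RHS]imset_id.
by apply: eq_in_imset => x Rx; rewrite /= g2K ?(subsetP (joing_subr B R)).
Qed.

End FusionSystem.

Section ChainStabilizer.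
Variables (gT : finGroupType) (C W : {group gT}).

Definition chain_stab : {set {perm gT}} :=
  [set a in Aut C | [forall x in C, x^-1 * a x \in W] && [forall w in W, a w == w]].

Lemma chain_stabP a :
  reflect [/\ a \in Aut C, {in C, forall x, x^-1 * a x \in W} & {in W, forall w, a w = w}]
          (a \in chain_stab).
Proof.
apply: (iffP setIdP) => [[Aa /andP[/forall_inP aC /forall_inP aW]] | [Aa aC aW]].
  by split=> // w /aW /eqP.
by split=> //; apply/andP; split; apply/forall_inP=> // w /aW ->.
Qed.

Lemma chain_stab_group_set : group_set chain_stab.
Proof.
apply/group_setP; split.
  by apply/chain_stabP; split=> [|x _|w _]; rewrite ?group1 ?perm1 ?mulVg.
move=> a b /chain_stabP[Aa aC aW] /chain_stabP[Ab bC bW].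
apply/chain_stabP; split=> [|x Cx|w Ww]; first exact: groupM.
  have Cax : a x \in C by rewrite Aut_closed.
  by rewrite permM -(mulKVg (a x) (b (a x))) mulgA groupM ?aC ?bC.
by rewrite permM aW ?bW.
Qed.

Canonical chain_stab_group := group chain_stab_group_set.

Lemma chain_stabX a n : a \in chain_stab ->
  {in C, forall x, (a ^+ n) x = x * (x^-1 * a x) ^+ n}.
Proof.
case/chain_stabP=> Aa aC aW x Cx; have Wd := aC x Cx.
have Cd : x^-1 * a x \in C by rewrite groupM ?groupV ?Aut_closed.
elim: n => [|n IHn]; first by rewrite expg0 perm1 mulg1.
rewrite expgSr permM IHn (morphicP (Aut_morphic Aa)) ?groupX // (aW _ (groupX n Wd)).
by rewrite expgS mulgA mulKVg.
Qed.

Lemma pgroup_chain_stab p : p.-group W -> p.-group chain_stab.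
Proof.
move=> pW; rewrite -pnat_exponent (pnat_dvd _ pW) //.
apply/exponentP=> a Sa; have /chain_stabP[Aa aC _] := Sa; apply/permP=> x.
have [Cx | nCx] := boolP (x \in C); last by rewrite perm1 permX_fix // (out_Aut Aa).
by rewrite perm1 chain_stabX // (expg_cardG (aC x Cx)) mulg1.
Qed.

Lemma chain_stab_norm (A : {group {perm gT}}) : A \subset Aut C ->
  {in A, forall a : {perm gT}, {in W, forall w, a w \in W}} ->
  A \subset 'N(chain_stab).
Proof.
move=> /subsetP sAC AW; apply/subsetP=> a Aa; rewrite inE sub_conjg.
apply/subsetP=> c /chain_stabP[Ac cC cW]; rewrite mem_conjgV.
have Aa' : a^-1 \in A by rewrite groupV.
have cJ y : (c ^ a) y = a (c (a^-1 y)) by rewrite -permJ permKV.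
have aM := morphicP (Aut_morphic (sAC a Aa)).
have aV y : y \in C -> a y^-1 = (a y)^-1.
  by move=> Cy; rewrite -(autmE (sAC a Aa)) morphV.
apply/chain_stabP; split=> [|x Cx|w Ww]; first exact: groupJ Ac (sAC a Aa).
  have Cy : a^-1 x \in C by rewrite Aut_closed ?sAC.
  rewrite cJ -{1}(permKV a x) -aV // -(aM _ _ (groupVr Cy) (Aut_closed Ac Cy)).
  exact: AW (cC _ Cy).
by rewrite cJ cW ?permKV //; apply: AW.
Qed.

End ChainStabilizer.

Lemma AutS_group_set (gT : finGroupType) (S C : {group gT}) : group_set (AutS S C).
Proof.
apply/group_setP; split.
  rewrite inE group1; apply/exists_inP; exists 1; rewrite ?group1 //.
  by apply/forall_inP=> x _; rewrite perm1 conjg1.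
move=> a b /setIdP[Aa /exists_inP[g NSg /forall_inP ag]].
case/setIdP=> Ab /exists_inP[h NSh /forall_inP bh].
rewrite inE groupM //; apply/exists_inP; exists (g * h); rewrite ?groupM //.
apply/forall_inP=> x Cx; have /setIP[_ nCg] := NSg.
by rewrite permM (eqP (ag x Cx)) (eqP (bh _ _)) ?conjgM ?memJ_norm.
Qed.

Canonical AutS_group (gT : finGroupType) (S C : {group gT}) :=
  group (AutS_group_set S C).

Section Saturated.
Variables (gT : finGroupType) (p : nat) (S : {group gT}) (hom : fhom_pred gT).
Hypotheses (satF : saturated_fusion_system p S hom) (pS : p.-group S).
Let fsF : is_fusion_system S hom. Proof. by case: satF. Qed.

Lemma chain_stab_AutS (C W : {group gT}) (a : {perm gT}) :
  C \subset S -> fully_normalized S hom C -> W \subset C ->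
  (forall b, hom C C b -> {in W, forall w, b w \in W}) ->
  hom C C a -> a \in chain_stab C W -> a \in AutS S C.
Proof.
move=> sCS fnC sWC invW ha Sa.
case: satF => _ /(_ C sCS fnC) [_ [AF [AFP sylAF]]] _.
pose AutF := group (AutF_group_set fsF sCS AFP).
have sAutF : AutF \subset Aut C by apply/subsetP=> b /AFP[].
have nStab : AutF \subset 'N(chain_stab C W).
  by apply: chain_stab_norm sAutF _ => b /AFP[_ hb]; apply: invW.
have pStab : p.-group (AutF :&: chain_stab C W).
  exact: pgroupS (subsetIr _ _) (pgroup_chain_stab _ (pgroupS (subset_trans sWC sCS) pS)).
have nsStab : AutF :&: chain_stab C W <| AutF.
  by rewrite /normal subsetIl normsI ?normG.
have maxAutS := Hall_max (G := AutF) (H := AutS_group S C) sylAF.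
apply: (subsetP (normal_sub_max_pgroup maxAutS pStab nsStab)).
by rewrite inE Sa andbT; apply/AFP; case/chain_stabP: Sa.
Qed.

Lemma mem_Nphi_chain_stab (A C W : {group gT}) f q r :
  hom A C f -> f @: A = C -> fully_normalized S hom C -> W \subset C ->
  (forall b, hom C C b -> {in W, forall w, b w \in W}) ->
  q \in 'N_S(A) -> r \in 'N_S(C) ->
  {in A, forall x, (f x)^-1 * f (x ^ q) ^ r^-1 \in W} ->
  {in A, forall x, f x \in W -> f (x ^ q) ^ r^-1 = f x} ->
  q \in Nphi S A f.
Proof.
move=> hf fAC fnC sWC invW NSq NSr fqW fqWfix.
have [_ [sAS sCS] _ _ _] := fhomP fsF hf.
have [fi [hfi fK fiK]] := fhom_inv fsF hf; rewrite fAC in hfi fiK.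
pose b y := f (fi y ^ q) ^ r^-1.
have hb : hom C C b.
  have /setIP[Sq /normP nAq] := NSq; have /setIP[Sr nCr] := NSr.
  have hq : hom A A (conjg^~ q) by apply: (fhom_conj fsF); rewrite ?nAq.
  have hr : hom C C (conjg^~ r^-1).
    by apply: (fhom_conj fsF); rewrite ?groupV ?(normP (groupVr nCr)).
  exact: (fhom_comp fsF (fhom_comp fsF (fhom_comp fsF hfi hq) hf) hr).
have bf x : x \in A -> b (f x) = f (x ^ q) ^ r^-1 by move=> Ax; rewrite /b fK.
have [a [Aa ha ab]] := fhom_perm fsF hb.
have Sa : a \in chain_stab C W.
  apply/chain_stabP; split=> // [y Cy | w Ww].
    by rewrite ab // -(fiK y Cy) bf ?fqW ?(fhom_mem fsF hfi Cy).
  have Cw := subsetP sWC w Ww; have Aw := fhom_mem fsF hfi Cw.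
  by rewrite ab // -(fiK w Cw) bf ?fqWfix ?fiK.
have /setIdP[_ /exists_inP[h NSh /forall_inP ah]] :=
  chain_stab_AutS sCS fnC sWC invW ha Sa.
apply: (mem_Nphi (h := h * r)) => //; first by rewrite fAC groupM.
move=> x Ax; have Cfx := fhom_mem fsF hf Ax.
by move/eqP: (ah _ Cfx); rewrite ab // bf // conjgM => <-; rewrite conjgKV.
Qed.

End Saturated.

Section NormalQuotient.
Variables (gT : finGroupType) (S : {group gT}) (hom : fhom_pred gT) (P Q : {group gT}).
Hypotheses (fsF : is_fusion_system S hom) (sPQ : P \subset Q) (sQS : Q \subset S).
Hypotheses (nP : fnormal S hom P) (nQP : fnormal (S / P) (quotient_hom P hom) (Q / P)).

Let clP := fnormal_strongly_closed nP.
Let nPS := strongly_closed_norm fsF (subset_trans sPQ sQS) clP.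

Lemma coset_fhom_repr A B f x : hom A B f -> P \subset A -> x \in A ->
  coset P (f (repr (coset P x))) = coset P (f x).
Proof.
move=> hf /subsetP sPA Ax; have [_ [sAS _] fM _ _] := fhomP fsF hf.
have Nx := subsetP (subset_trans sAS nPS) x Ax.
have /rcosetP[z Pz ->] : repr (coset P x) \in P :* x.
  by rewrite -val_coset ?mem_repr_coset.
by rewrite fM ?(sPA z Pz) // coset_kerl // (clP hf (sPA z Pz) Pz).
Qed.

Lemma quotient_fhom (A B : {group gT}) f : hom A B f -> P \subset A ->
  quotient_hom P hom (A / P) (B / P) (fun c => coset P (f (repr c))).
Proof.
move=> hf sPA; have [_ _ _ _ sfAB] := fhomP fsF hf.
have sPB : P \subset B.
  by rewrite -(strongly_closed_im fsF clP hf sPA) (subset_trans (imsetS f sPA) sfAB).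
by exists A, B, f; split=> // x Ax; rewrite (coset_fhom_repr hf).
Qed.

Lemma quotient_lift (A B : {group gT}) f : hom A B f -> P \subset A ->
  exists R1 R2 psi, [/\ hom R1 R2 psi, A \subset R1, Q \subset R1,
    {in A, forall x, f x \in P :* psi x} & {in Q, forall x, psi x \in Q}].
Proof.
move=> hf sPA; have [_ [sAS sBS] _ _ _] := fhomP fsF hf.
have [_ /(_ _ _ _ (quotient_fhom hf sPA))] := nQP.
case=> _ [_ [g [[R1 [R2 [psi [[sPR1 _] hpsi <- _ psiE]]]] sAR1 sQR1 gE gQ]]].
have [_ [_ sR2S] _ _ _] := fhomP fsF hpsi.
have Npsi x : x \in R1 -> psi x \in 'N(P).
  by move=> R1x; rewrite (subsetP nPS) ?(subsetP sR2S) ?(fhom_mem fsF hpsi R1x).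
rewrite !quotientSGK ?(subset_trans sAS nPS) ?(subset_trans sQS nPS) // in sAR1 sQR1.
exists R1, R2, psi; split=> // [x Ax | q Qq].
  have Nfx : f x \in 'N(P).
    by rewrite (subsetP nPS) ?(subsetP sBS) ?(fhom_mem fsF hf Ax).
  apply/rcoset_kercosetP; rewrite ?Npsi ?(subsetP sAR1) //.
  by rewrite -psiE ?(subsetP sAR1) // gE ?mem_quotient // (coset_fhom_repr hf).
have PnQ : P <| Q by rewrite /normal sPQ (subset_trans sQS nPS).
rewrite -(quotientGK PnQ); apply: mem_morphpre; rewrite ?Npsi ?(subsetP sQR1) //=.
by rewrite -psiE ?(subsetP sQR1) // -gQ imset_f ?mem_quotient.
Qed.

Lemma strongly_closed_Q : strongly_closed hom Q.
Proof.
move=> A B f x hf Ax Qx; have [_ /(_ _ _ _ hf)] := nP.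
case=> A1 [B1 [g [hg sAA1 sPA1 gf _]]]; have [[gA1 gB1] _ _ _ _] := fhomP fsF hg.
have [R1 [R2 [psi [_ _ _ gpsi psiQ]]]] :=
  quotient_lift (A := group gA1) (B := group gB1) hg sPA1.
rewrite -gf //; have /rcosetP[z Pz ->] := gpsi x (subsetP sAA1 x Ax).
exact: groupM (subsetP sPQ z Pz) (psiQ x Qx).
Qed.

End NormalQuotient.

Section ExtendToNormalizeQ.
Variables (gT : finGroupType) (p : nat) (S : {group gT}) (hom : fhom_pred gT).
Variables (P Q : {group gT}).
Hypotheses (satF : saturated_fusion_system p S hom) (pS : p.-group S).
Hypotheses (sPQ : P \subset Q) (sQS : Q \subset S).
Hypotheses (nP : fnormal S hom P) (nQP : fnormal (S / P) (quotient_hom P hom) (Q / P)).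

Let fsF : is_fusion_system S hom. Proof. by case: satF. Qed.
Let clP := fnormal_strongly_closed nP.
Let clQ := strongly_closed_Q fsF sPQ sQS nP nQP.
Let nQS := strongly_closed_norm fsF sQS clQ.

Lemma norm_sub_Nphi_abelian (A C : {group gT}) f : abelian Q ->
  hom A C f -> f @: A = C -> fully_normalized S hom C -> 'N_Q(A) \subset Nphi S A f.
Proof.
move=> abQ hf fAC fnC; apply/subsetP=> q /setIP[Qq nAq].
have [_ [sAS _] fM _ _] := fhomP fsF hf.
have [fi [hfi fK _]] := fhom_inv fsF hf; rewrite fAC in hfi.
apply: (mem_Nphi_chain_stab (W := (C :&: Q)%G) (r := 1) satF pS hf fAC fnC).
- exact: subsetIl.
- by move=> b hb w /setIP[Cw Qw]; rewrite inE (fhom_mem fsF hb Cw) (clQ hb Cw Qw).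
- by rewrite inE (subsetP sQS).
- exact: group1.
- move=> x Ax; have Axq : x ^ q \in A by rewrite memJ_norm.
  have Axq' : x^-1 * x ^ q \in A by rewrite groupM ?groupV.
  rewrite invg1 conjg1 -(fhomV fsF hf Ax) -fM ?groupV // inE (fhom_mem fsF hf Axq').
  apply: clQ hf Axq' _; rewrite -commgEl commgEr groupM ?memJ_norm ?groupV //.
  by rewrite (subsetP nQS) ?(subsetP sAS).
move=> x Ax /setIP[_ Qfx]; rewrite invg1 conjg1.
have Qx : x \in Q by rewrite -(fK x Ax) (clQ hfi) ?(fhom_mem fsF hf Ax).
by have -> : x ^ q = x by apply/conjg_fixP/commgP/(centsP abQ).
Qed.

Lemma norm_sub_Nphi_cent (A C : {group gT}) f : S \subset 'C(P) ->
  hom A C f -> f @: A = C -> fully_normalized S hom C -> P \subset A ->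
  'N_Q(A) \subset Nphi S A f.
Proof.
move=> cPS hf fAC fnC sPA; apply/subsetP=> q /setIP[Qq nAq].
have [_ [_ sCS] _ finj _] := fhomP fsF hf.
have cP s z : s \in S -> z \in P -> z ^ s = z.
  by move=> Ss Pz; apply/conjg_fixP/commgP/commute_sym/(centsP cPS).
have [R1 [R2 [psi [hpsi sAR1 sQR1 fpsi _]]]] :=
  quotient_lift fsF sPQ sQS nP nQP hf sPA.
pose r := psi q.
have Sr : r \in S.
  have [_ [_ sR2S] _ _ _] := fhomP fsF hpsi.
  by rewrite (subsetP sR2S) ?(fhom_mem fsF hpsi) ?(subsetP sQR1).
have sPC : P \subset C by rewrite -fAC -(strongly_closed_im fsF clP hf sPA) imsetS.
have Axq x : x \in A -> x ^ q \in A by move=> Ax; rewrite memJ_norm.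
have fJ x : x \in A -> f (x ^ q) * (f x ^ r)^-1 \in P.
  move=> Ax; have /rcosetP[z1 Pz1 ->] := fpsi x Ax.
  have /rcosetP[z2 Pz2 ->] := fpsi _ (Axq x Ax).
  rewrite (fhomJ fsF hpsi (subsetP sAR1 x Ax) (subsetP sQR1 q Qq)) -/r.
  rewrite conjMg (cP r z1) //.
  by rewrite invMg mulgA mulgK groupM ?groupV.
have fqE x : x \in A -> f (x ^ q) = (f (x ^ q) * (f x ^ r)^-1) * f x ^ r.
  by move=> Ax; rewrite mulgKV.
have NSr : r \in 'N_S(C).
  rewrite inE Sr inE -{1}fAC; apply/subsetP=> _ /imsetP[_ /imsetP[x Ax ->] ->].
  have -> : f x ^ r = (f (x ^ q) * (f x ^ r)^-1)^-1 * f (x ^ q).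
    by rewrite invMg invgK mulgKV.
  by rewrite groupM ?groupV ?(subsetP sPC _ (fJ x Ax)) ?(fhom_mem fsF hf (Axq x Ax)).
apply: (mem_Nphi_chain_stab satF pS hf fAC fnC sPC) NSr _ _.
- by move=> b hb w Pw; apply: clP hb (subsetP sPC w Pw) Pw.
- by rewrite inE (subsetP sQS).
- move=> x Ax; rewrite (fqE x Ax) conjMg conjgK (cP r^-1) ?groupV ?fJ //.
  by rewrite -conjgE (cP (f x)) ?fJ // (subsetP sCS) ?(fhom_mem fsF hf Ax).
move=> x Ax Pfx; have Px : x \in P.
  have : f x \in f @: P by rewrite (strongly_closed_im fsF clP hf sPA).
  case/imsetP=> y Py fxy.
  by rewrite (finj x y Ax (subsetP sPA y Py) fxy).
by rewrite (cP q x) ?(subsetP sQS) // cP ?groupV.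
Qed.

Hypothesis Q_abelian_or_P_central : abelian Q \/ S \subset 'C(P).

Lemma norm_sub_Nphi (A C : {group gT}) f :
  hom A C f -> f @: A = C -> fully_normalized S hom C -> P \subset A ->
  'N_Q(A) \subset Nphi S A f.
Proof.
move=> hf fAC fnC sPA; case: Q_abelian_or_P_central => [abQ | cPS].
  exact: norm_sub_Nphi_abelian abQ hf fAC fnC.
exact: norm_sub_Nphi_cent cPS hf fAC fnC sPA.
Qed.

Definition extendable_above n := forall (A : {group gT}) B f,
  hom A B f -> P \subset A -> n < #|A| -> extends_normalizing hom Q A f.

Lemma extends_normalizing_fully_normalized (A C : {group gT}) f :
  extendable_above #|A| -> hom A C f -> f @: A = C -> fully_normalized S hom C ->
  P \subset A -> extends_normalizing hom Q A f.
Proof.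
move=> IH hf fAC fnC sPA; have [sQA | nsQA] := boolP (Q \subset A).
  by exists A, C, f; split=> //; apply: (strongly_closed_im fsF clQ hf sQA).
have [_ [sAS sCS] _ _ _] := fhomP fsF hf.
have [g [hg gf]] : exists g, hom (Nphi S A f) S g /\ {in A, g =1 f}.
  case: satF => _ sylow ext; apply: ext (fhom_widen fsF hf sCS (subxx S)) _.
  by rewrite fAC; have [] := sylow C sCS fnC.
have [[gN _] _ _ _ _] := fhomP fsF hg.
pose D := 'N_(A <*> Q)(A)%G.
have sDN : D \subset Nphi S A f.
  rewrite /= norm_joinEl ?(subset_trans sAS nQS) // -group_modl ?normG //.
  apply: (mul_subG (G := group gN)); first exact: (sub_Nphi fsF hf).
  exact: (norm_sub_Nphi hf fAC fnC sPA).
have sAD : A \subset D by rewrite subsetI joing_subl normG.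
have ltAD : #|A| < #|D|.
  apply/proper_card/nilpotent_proper_norm.
    by apply: pgroup_nil (pgroupS _ pS); rewrite join_subG sAS sQS.
  rewrite properEneq joing_subl andbT; apply: contraNneq nsQA => ->.
  exact: joing_subr.
apply: (extends_normalizingS sAD gf).
exact: IH (fhom_restr fsF hg sDN) (subset_trans sPA sAD) ltAD.
Qed.

Lemma extends_normalizing_step (A : {group gT}) B f :
  extendable_above #|A| -> hom A B f -> P \subset A -> extends_normalizing hom Q A f.
Proof.
move=> IH hf sPA; pose B1 := group (fhom_im_group fsF hf).
have hf1 : hom A B1 f := fhom_onto fsF hf.
have [_ [_ sB1S] _ _ _] := fhomP fsF hf1.
have [C [chi [hchi chiB1 fnC]]] := exists_fully_normalized fsF sB1S.
apply: (extends_normalizing_cancel fsF nQS hf1).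
  apply: extends_normalizing_fully_normalized IH (fhom_comp fsF hf1 hchi) _ fnC sPA.
  by rewrite imset_comp chiB1.
apply: extends_normalizing_fully_normalized hchi chiB1 fnC _.
  move=> A' B' f' hf' sPA' ltA'; apply: IH hf' sPA' _.
  by rewrite -(card_fhom_im fsF hf).
by rewrite -(strongly_closed_im fsF clP hf sPA) imsetS.
Qed.

Lemma extends_normalizing_all (A : {group gT}) B f :
  hom A B f -> P \subset A -> extends_normalizing hom Q A f.
Proof.
have [n] := ubnP (#|S| - #|A|).
elim: n A B f => [|n IHn] A B f; rewrite ?ltn0 // => ltn hf sPA.
apply: extends_normalizing_step hf sPA => A' B' f' hf' sPA' ltAA'.
apply: (IHn A' B' f' _ hf' sPA'); have [_ [sA'S _] _ _ _] := fhomP fsF hf'.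
have ltAS := leq_trans ltAA' (subset_leq_card sA'S).
exact: leq_trans (ltn_sub2l ltAS ltAA') ltn.
Qed.

End ExtendToNormalizeQ.

Theorem lemma1p19 (gT : finGroupType) (p : nat) (S : {group gT})
    (hom : {set gT} -> {set gT} -> (gT -> gT) -> Prop) (P Q : {group gT}) :
  prime p -> p.-group S -> saturated_fusion_system p S hom ->
  P \subset Q -> Q \subset S ->
  fnormal S hom P ->
  fnormal (S / P) (quotient_hom P hom) (Q / P) ->
  abelian Q \/ (exists Z : {group gT}, is_fcenter S hom Z /\ P \subset Z) ->
  fnormal S hom Q.
Proof.
move=> _ pS satF sPQ sQS nP nQP QabVcent.
have fsF : is_fusion_system S hom by case: satF.
have Q_abelian_or_P_central : abelian Q \/ S \subset 'C(P).
  case: QabVcent => [abQ | [Z [[cZ _] sPZ]]]; [by left | right].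
  exact: subset_trans (fcentral_cent fsF cZ) (centS sPZ).
split=> // A B f hf; have [_ /(_ _ _ _ hf)] := nP.
case=> A1 [B1 [g [hg sAA1 sPA1 gf _]]]; have [[gA1 _] _ _ _ _] := fhomP fsF hg.
apply: extends_normalizingS sAA1 gf _.
exact: (extends_normalizing_all satF pS sPQ sQS nP nQP Q_abelian_or_P_central
          (A := group gA1) hg sPA1).
Qed.
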